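(* Let $G$ be a connected graph, let $u,v\in V(G)$, and let $u=w_0,w_1,\dots,w_k=v$ with $k\geq 2$ be an internal path between $u$ and $v$, i.e. $w_iw_{i+1}\in E(G)$ for $0\le i\le k-1$ and each of $w_1,\dots,w_{k-1}$ has degree two in $G$. Let $H=G-w_1-\dots-w_{k-1}$ be the graph obtained by deleting $w_1,\dots,w_{k-1}$ from $G$. Then the sequence $Tr_G(w_0),Tr_G(w_1),\dots,Tr_G(w_k)$ is unimodal if $H$ is connected, and inversely unimodal if $H$ is disconnected.
   Context: $Tr_G(x)=\sum_{y\in V(G)} d_G(x,y)$ is the transmission of $x$, where $d_G$ is the shortest-path distance. A sequence $s_1,\dots,s_m$ is unimodal if there is $t\in\{1,\dots,m\}$ with $s_1\le\dots\le s_t\ge s_{t+1}\ge\dots\ge s_m$, and inversely unimodal if there is $t$ with $s_1\ge\dots\ge s_t\le s_{t+1}\le\dots\le s_m$. *)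

(* A finite simple graph is a symmetric irreflexive
   relation e : rel T on a finite vertex type T. *)
From mathcomp Require Import all_boot all_order.
Set Implicit Arguments. Unset Strict Implicit. Unset Printing Implicit Defensive.

Definition walk_of_len (T : finType) (e : rel T) (n : nat) (x y : T) : bool :=
  [exists p : n.-tuple T, path e x p && (last x p == y)].

(* shortest-path distance: the least n < #|T| admitting a walk of length n
   (in a connected graph such an n always exists; otherwise #|T|) *)
Definition dist (T : finType) (e : rel T) (x y : T) : nat :=
  find (fun n => walk_of_len e n x y) (iota 0 #|T|).

Definition Tr (T : finType) (e : rel T) (x : T) : nat := \sum_(y : T) dist e x y.

Definition deg (T : finType) (e : rel T) (x : T) : nat := #|[set y | e x y]|.

Definition connected (T : finType) (e : rel T) : Prop := forall x y, connect e x y.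

Definition connected_on (T : finType) (e : rel T) (S : {set T}) : Prop :=
  forall x y, x \in S -> y \in S ->
    connect [rel a b | [&& a \in S, b \in S & e a b]] x y.

Definition unimodal (s : nat -> nat) (k : nat) : Prop :=
  exists2 t, t <= k &
    (forall i, i < t -> s i <= s i.+1) /\ (forall i, t <= i < k -> s i.+1 <= s i).

Definition inv_unimodal (s : nat -> nat) (k : nat) : Prop :=
  exists2 t, t <= k &
    (forall i, i < t -> s i.+1 <= s i) /\ (forall i, t <= i < k -> s i <= s i.+1).

(* Let x be a vertex of degree two with neighbours a and b.  For y <> x,
   d(x,y) = 1 + min (d(a,y), d(b,y)), hence 2 d(x,y) - d(a,y) - d(b,y) =
   2 - |d(a,y) - d(b,y)|, while y = x contributes -2 to 2 Tr x - Tr a - Tr b.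
   If a and b are joined by a path avoiding x, then d(a,.) - d(b,.) changes
   sign along it, and the places where it does so give back at least 2:
   Tr a + Tr b <= 2 Tr x.  If instead x separates a from b, shortest paths
   between the two sides run through x, and 2 Tr x <= Tr a + Tr b.  For an
   internal vertex w_(i+1), the first case occurs when H is connected and
   the second when it is not; concave sequences are unimodal and convex ones
   inversely unimodal. *)

From mathcomp Require Import all_boot all_order zify.
Set Implicit Arguments. Unset Strict Implicit. Unset Printing Implicit Defensive.

Section Walks.
Variables (T : finType) (e : rel T).

Lemma walk_of_lenP n x y :
  reflect (exists p, [/\ size p = n, path e x p & last x p = y])
          (walk_of_len e n x y).
Proof.
apply: (iffP existsP) => [[p /andP[ep /eqP lp]]|[p [sp ep lp]]].
  by exists (tval p); rewrite size_tuple.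
have sp' : size p == n by rewrite sp.
by exists (Tuple sp'); rewrite /= ep lp eqxx.
Qed.

Lemma walk_of_len0 x y : walk_of_len e 0 x y = (x == y).
Proof.
apply/walk_of_lenP/eqP => [[p [/size0nil -> _ <-]] //|<-].
by exists [::].
Qed.

Lemma walk_of_lenSP n x y :
  reflect (exists2 z, e x z & walk_of_len e n z y) (walk_of_len e n.+1 x y).
Proof.
apply: (iffP (walk_of_lenP _ _ _)) => [[[|z p] [//= [sp] /andP[exz ep] lp]]|].
  by exists z => //; apply/walk_of_lenP; exists p.
case=> z exz /walk_of_lenP[p [sp ep lp]].
by exists (z :: p); rewrite /= exz sp.
Qed.

Lemma walk_of_len_rcons n x z y :
  walk_of_len e n x z -> e z y -> walk_of_len e n.+1 x y.
Proof.
case/walk_of_lenP=> p [sp ep lp] ezy; apply/walk_of_lenP.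
by exists (rcons p y); rewrite size_rcons rcons_path last_rcons ep lp ezy sp.
Qed.

Lemma dist_le n x y : walk_of_len e n x y -> dist e x y <= n.
Proof.
move=> wn; rewrite /dist; have [nT|Tn] := ltnP n #|T|.
  by rewrite leqNgt; apply/negP => /(before_find 0); rewrite nth_iota // add0n wn.
by apply: leq_trans (find_size _ _) _; rewrite size_iota.
Qed.

Lemma walk_of_len_dist x y : connect e x y -> walk_of_len e (dist e x y) x y.
Proof.
case/connectP=> p ep ->; case/shortenP: ep => q eq uq _.
have sq : size q < #|T|.
  by have := max_card (mem (x :: q)); rewrite (card_uniqP uq).
have hq : has (fun n => walk_of_len e n x (last x q)) (iota 0 #|T|).
  apply/hasP; exists (size q); first by rewrite mem_iota.
  by apply/walk_of_lenP; exists q.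
have := nth_find 0 hq; rewrite /dist nth_iota ?add0n //.
by rewrite -[X in _ < X](size_iota 0) -has_find.
Qed.

Lemma dist_refl x : dist e x x = 0.
Proof. by apply/eqP; rewrite -leqn0 dist_le ?walk_of_len0. Qed.

Lemma dist_eq0 x y : connect e x y -> (dist e x y == 0) = (x == y).
Proof.
move=> cxy; apply/eqP/eqP => [d0|<-]; last exact: dist_refl.
by move: (walk_of_len_dist cxy); rewrite d0 walk_of_len0 => /eqP.
Qed.

Lemma dist_nbr_l x z y : e x z -> connect e z y -> dist e x y <= (dist e z y).+1.
Proof.
move=> exz czy; apply: dist_le; apply/walk_of_lenSP.
by exists z; last exact: walk_of_len_dist.
Qed.

Lemma dist_nbr_toward x y : connect e x y -> x != y ->
  exists2 z, e x z & dist e z y < dist e x y.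
Proof.
move=> cxy; rewrite -(dist_eq0 cxy); move: (walk_of_len_dist cxy).
case: (dist e x y) => // n /walk_of_lenSP[z exz wz] _.
by exists z => //; apply: dist_le.
Qed.

Hypothesis e_sym : symmetric e.

Lemma walk_of_len_sym n x y : walk_of_len e n x y -> walk_of_len e n y x.
Proof.
elim: n x y => [|n IH] x y; first by rewrite !walk_of_len0 eq_sym.
case/walk_of_lenSP=> z exz /IH wyz.
by apply: walk_of_len_rcons wyz _; rewrite e_sym.
Qed.

Lemma dist_sym x y : dist e x y = dist e y x.
Proof. by apply: eq_find => n; apply/idP/idP; apply: walk_of_len_sym. Qed.

End Walks.

Section Induced.
Variables (T : finType) (r : rel T).
Implicit Types S : {set T}.

Definition induced (S : {set T}) : rel T := [rel a b | [&& a \in S, b \in S & r a b]].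

Lemma induced_sym S : symmetric r -> symmetric (induced S).
Proof. by move=> r_sym a b; rewrite /induced /= r_sym andbCA. Qed.

Lemma connect_induced_in S x y : x \in S -> connect (induced S) x y -> y \in S.
Proof.
move=> xS cxy; rewrite -(closed_connect _ cxy) // => a b /and3P[aS bS _].
by rewrite aS bS.
Qed.

Lemma connect_induced_sub S S' x y :
  S \subset S' -> connect (induced S) x y -> connect (induced S') x y.
Proof.
move=> sSS'; apply: connect_sub => a b /and3P[aS bS rab]; apply: connect1.
by rewrite /induced /= (subsetP sSS' _ aS) (subsetP sSS' _ bS).
Qed.

Lemma connect_exit S y z : y \in S -> z \notin S -> connect r y z ->
  exists z1 z2, [/\ connect (induced S) y z1, r z1 z2 & z2 \notin S].
Proof.
move=> yS zS /connectP[p]; elim: p y yS => [|z' p IH] y yS /=.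
  by move=> _ yz; rewrite yz yS in zS.
case/andP=> ryz' ep lp; have [z'S|z'S] := boolP (z' \in S).
  have [z1 [z2 [cz1 rz1 z2S]]] := IH z' z'S ep lp.
  exists z1, z2; split=> //; apply: connect_trans cz1; apply: connect1.
  by rewrite /induced /= yS z'S.
by exists y, z'; split; first exact: connect0.
Qed.

Lemma connect_ivt (f g : T -> nat) a b :
  (forall z z', r z z' -> f z' <= (f z).+1) ->
  (forall z z', r z z' -> g z <= (g z').+1) ->
  connect r a b -> f a <= g a -> g b < f b ->
  exists2 y, connect r a y & f y <= g y <= (f y).+1.
Proof.
move=> f_lip g_lip /connectP[p]; elim: p a => [|z p IH] a /=.
  by move=> _ -> ab ba; move: (leq_ltn_trans ab ba); rewrite ltnn.
case/andP=> raz ep lp fga gfb; have [fgz|gfz] := leqP (f z) (g z).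
  have [y cy fgy] := IH z ep lp fgz gfb.
  by exists y => //; apply: connect_trans cy; apply: connect1.
exists a; first exact: connect0.
by have := f_lip _ _ raz; have := g_lip _ _ raz; lia.
Qed.

End Induced.

Lemma switch_point (P : pred nat) k :
  (forall i, i.+1 < k -> P i -> P i.+1) ->
  exists2 t, t <= k & (forall i, i < t -> ~~ P i) /\ (forall i, t <= i < k -> P i).
Proof.
move=> PS; have ex : exists t, (t == k) || P t by exists k; rewrite eqxx.
case: (ex_minnP ex) => t Pt t_min; have tk : t <= k by rewrite t_min ?eqxx.
exists t => //; split=> [i it|].
  by apply/negP => Pi; move: (t_min i); rewrite Pi orbT leqNgt it => /(_ isT).
elim=> [|i IH] /andP[ti ik].
  by move: ti Pt; rewrite leqn0 => /eqP->; rewrite eq_sym gtn_eqF.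
have [tE|ti'] := eqVneq t i.+1; first by move: Pt; rewrite tE (ltn_eqF ik).
by apply: PS => //; apply: IH; lia.
Qed.

Lemma unimodal_of_concave (s : nat -> nat) k :
  (forall i, i.+1 < k -> s i + s i.+2 <= 2 * s i.+1) -> unimodal s k.
Proof.
move=> s_cave; have [|t tk [up down]] := @switch_point (fun i => s i.+1 < s i) k.
  by move=> i ik /=; have := s_cave i ik; lia.
by exists t => //; split=> i it; [rewrite leqNgt up | apply/ltnW/down].
Qed.

Lemma inv_unimodal_of_convex (s : nat -> nat) k :
  (forall i, i.+1 < k -> 2 * s i.+1 <= s i + s i.+2) -> inv_unimodal s k.
Proof.
move=> s_vex; have [|t tk [down up]] := @switch_point (fun i => s i < s i.+1) k.
  by move=> i ik /=; have := s_vex i ik; lia.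
by exists t => //; split=> i it; [rewrite leqNgt down | apply/ltnW/up].
Qed.

Section Transmission.
Variables (T : finType) (e : rel T).
Hypotheses (e_sym : symmetric e) (e_irr : irreflexive e) (e_conn : connected e).

Lemma adj_neq x y : e x y -> x != y.
Proof. by apply: contraTneq => ->; rewrite e_irr. Qed.

Lemma dist_adj x y : e x y -> dist e x y = 1.
Proof.
move=> exy; apply/eqP; rewrite eqn_leq lt0n dist_eq0 ?adj_neq ?andbT //.
by apply: dist_le; apply/walk_of_lenSP; exists y; rewrite ?walk_of_len0.
Qed.

Lemma dist_nbr_r x z z' : e z z' -> dist e x z' <= (dist e x z).+1.
Proof. by move=> ezz'; rewrite !(dist_sym e_sym x) dist_nbr_l // e_sym. Qed.

Lemma deg2_nbr x a b z : deg e x = 2 -> e x a -> e x b -> a != b ->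
  e x z -> z = a \/ z = b.
Proof.
move=> dx xa xb ab xz.
have /eqP N_ab : [set a; b] == [set y | e x y].
  rewrite eqEcard cards2 ab -/(deg e x) dx andbT.
  by apply/subsetP => y; rewrite !inE => /orP[] /eqP->.
have : z \in [set y | e x y] by rewrite inE.
by rewrite -N_ab !inE => /orP[] /eqP; [left|right].
Qed.

Lemma dist_deg2 x a b y : e x a -> e x b -> (forall z, e x z -> z = a \/ z = b) ->
  y != x -> dist e x y = (minn (dist e a y) (dist e b y)).+1.
Proof.
move=> xa xb nbr yx; rewrite eq_sym in yx.
have [z xz zy] := dist_nbr_toward (e_conn x y) yx.
have := dist_nbr_l xa (e_conn a y); have := dist_nbr_l xb (e_conn b y).
by case: (nbr z xz) zy => -> ; lia.
Qed.

Lemma Tr_deg2_concave x a b : a != b -> e x a -> e x b ->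
  (forall z, e x z -> z = a \/ z = b) -> connect (induced e [set~ x]) a b ->
  Tr e a + Tr e b <= 2 * Tr e x.
Proof.
move=> ab xa xb nbr cab; set R := induced e [set~ x].
have R_sym : symmetric R := induced_sym _ e_sym.
have lip c z z' : R z z' -> dist e c z' <= (dist e c z).+1.
  by case/and3P=> _ _; apply: dist_nbr_r.
have lip' c z z' : R z z' -> dist e c z <= (dist e c z').+1.
  by rewrite R_sym; apply: lip.
have dist_ab : 0 < dist e a b by rewrite lt0n dist_eq0.
pose tie_a y := dist e a y <= dist e b y <= (dist e a y).+1.
pose tie_b y := dist e b y <= dist e a y <= (dist e b y).+1.
have [y1 cy1 tie1] : exists2 y, connect R a y & tie_a y.
  by apply: connect_ivt (lip a) (lip' b) cab _ _; rewrite dist_refl.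
have [y2 cy2 tie2] : exists2 y, connect R b y & tie_b y.
  have cba : connect R b a by rewrite (sym_connect_sym R_sym).
  by apply: connect_ivt (lip b) (lip' a) cba _ _; rewrite dist_refl // dist_sym.
have notx c y : c != x -> connect R c y -> y != x.
  by move=> cx /connect_induced_in; rewrite !inE; apply.
have y1x : y1 != x by apply: notx cy1; rewrite eq_sym adj_neq.
have y2x : y2 != x by apply: notx cy2; rewrite eq_sym adj_neq.
(* |d(a,y) - d(b,y)| <= 2, and 2 - |d(a,y) - d(b,y)| = tie_a y + tie_b y. *)
have gain y : y != x ->
    dist e a y + dist e b y + tie_a y + tie_b y <= 2 * dist e x y.
  move=> yx; have ax : e a x by rewrite e_sym.
  have bx : e b x by rewrite e_sym.
  have := dist_nbr_l ax (e_conn x y); have := dist_nbr_l bx (e_conn x y).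
  rewrite /tie_a /tie_b (dist_deg2 xa xb nbr yx).
  by move: (dist e a y) (dist e b y) => da db; clear; lia.
have Tr_split c : Tr e c = dist e c x + \sum_(y | y != x) dist e c y.
  by rewrite /Tr (bigD1 x).
have gain_sum y0 (P : pred T) :
    y0 != x -> P y0 -> 1 <= \sum_(y | y != x) (P y : nat).
  by move=> y0x Py0; rewrite (bigD1 y0) //= Py0.
have := leq_sum (index_enum T) gain; rewrite -big_distrr !big_split /=.
rewrite !Tr_split dist_refl (dist_sym e_sym a) (dist_sym e_sym b) !dist_adj //.
have := gain_sum _ _ y1x tie1; have := gain_sum _ _ y2x tie2; clear; lia.
Qed.

Section Cut.
Variables (x : T) (A : {set T}).
Hypothesis A_closed : forall z z', z \in A -> e z z' -> z' != x -> z' \in A.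

Lemma dist_cut p q : p \in A -> q \notin A -> dist e p x + dist e x q <= dist e p q.
Proof.
move=> pA qA; move: (walk_of_len_dist (e_conn p q)).
move: (dist e p q) => n; elim: n p pA => [|n IH] p pA.
  by rewrite walk_of_len0 => /eqP pq; move: qA; rewrite -pq pA.
case/walk_of_lenSP=> z epz wz; have [zx|zx] := eqVneq z x.
  by rewrite zx in epz wz; rewrite (dist_adj epz) ltnS dist_le.
have := IH z (A_closed pA epz zx) wz; have := dist_nbr_l epz (e_conn z x); lia.
Qed.

Lemma Tr_cut_convex a b : e x a -> e x b -> a \in A -> b \notin A ->
  2 * Tr e x <= Tr e a + Tr e b.
Proof.
move=> xa xb aA bA; rewrite /Tr big_distrr -big_split; apply: leq_sum => y _ /=.
have ax : e a x by rewrite e_sym.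
have bx : e b x by rewrite e_sym.
have [yA|yA] := boolP (y \in A).
  have := dist_cut yA bA; rewrite (dist_adj xb) !(dist_sym e_sym y).
  have := dist_nbr_l xa (e_conn a y); lia.
have := dist_cut aA yA; rewrite (dist_adj ax).
have := dist_nbr_l xb (e_conn b y); lia.
Qed.

End Cut.

End Transmission.

Section InternalPath.
Variables (T : finType) (e : rel T) (k : nat) (w : nat -> T).
Hypotheses (e_sym : symmetric e) (e_irr : irreflexive e) (e_conn : connected e).
Hypotheses (k_ge2 : 2 <= k)
  (w_inj : forall i j, i <= k -> j <= k -> w i = w j -> i = j)
  (w_edge : forall i, i < k -> e (w i) (w i.+1))
  (w_deg : forall i, 0 < i < k -> deg e (w i) = 2).

Definition outer := [set x | ~~ [exists i : 'I_k.+1, (0 < i < k) && (x == w i)]].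

Lemma w_eq i j : i <= k -> j <= k -> (w i == w j) = (i == j).
Proof. by move=> ik jk; apply/eqP/eqP => [/w_inj|->]; [apply|]. Qed.

Lemma notin_outerP z : reflect (exists2 i, 0 < i < k & z = w i) (z \notin outer).
Proof.
rewrite inE negbK; apply: (iffP existsP) => [[i /andP[iI /eqP->]]|[i iI ->]].
  by exists i.
have ik : i < k.+1 by case/andP: iI => _ /ltnW.
by exists (Ordinal ik); rewrite /= iI eqxx.
Qed.

Lemma w_outer i : i <= k -> (w i \in outer) = (i == 0) || (i == k).
Proof.
move=> ik; apply/idP/idP => [|iE].
  by apply: contraLR => iI; apply/notin_outerP; exists i => //; lia.
apply: contraT => /notin_outerP[j jI /w_inj]; have jk : j <= k by lia.
by move=> /(_ ik jk) ij; lia.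
Qed.

Lemma w0_outer : w 0 \in outer.
Proof. by rewrite w_outer. Qed.

Lemma inner_nbr j z : 0 < j < k -> e (w j) z -> z = w j.-1 \/ z = w j.+1.
Proof.
move=> jI; have [j_gt0 jk] := andP jI.
apply: deg2_nbr (w_deg jI) _ _ _; last by rewrite w_eq; lia.
  by rewrite e_sym -{2}(prednK j_gt0) w_edge //; lia.
exact: w_edge.
Qed.

Lemma connect_w_range (S : {set T}) j l : l <= k -> j <= l ->
  (forall h, j <= h <= l -> w h \in S) -> connect (induced e S) (w j) (w l).
Proof.
elim: l => [|l IH] lk jl wS; first by move: jl; rewrite leqn0 => /eqP->.
have [->|jl'] := eqVneq j l.+1; first exact: connect0.
apply: connect_trans (IH _ _ _) (connect1 _) => [||h hh|]; try lia.
  by apply: wS; lia.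
by rewrite /induced /= !wS ?w_edge //; lia.
Qed.

Lemma Tr_path_concave i : connected_on e outer -> i.+1 < k ->
  Tr e (w i) + Tr e (w i.+2) <= 2 * Tr e (w i.+1).
Proof.
move=> H_conn ik; set S := [set~ w i.+1].
have wS h : h <= k -> h != i.+1 -> w h \in S.
  by move=> hk hi; rewrite !inE w_eq //; lia.
have outerS : outer \subset S.
  apply/subsetP => z zH; rewrite !inE.
  by apply: contraTneq zH => ->; rewrite w_outer; lia.
have RS := sym_connect_sym (induced_sym S e_sym).
have c_left : connect (induced e S) (w i) (w 0).
  by rewrite RS; apply: connect_w_range => // [|h hh]; [lia | apply: wS; lia].
have c_mid : connect (induced e S) (w 0) (w k).
  apply: connect_induced_sub outerS (H_conn _ _ _ _); first exact: w0_outer.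
  by rewrite w_outer ?eqxx ?orbT.
have c_right : connect (induced e S) (w k) (w i.+2).
  by rewrite RS; apply: connect_w_range => // [h hh]; apply: wS; lia.
apply: (Tr_deg2_concave e_sym e_irr e_conn (x := w i.+1)).
- by rewrite w_eq //; lia.
- by rewrite e_sym w_edge //; lia.
- exact: w_edge.
- by move=> z; apply: inner_nbr; lia.
- exact: connect_trans c_left (connect_trans c_mid c_right).
Qed.

Lemma outer_connect_ends y : y \in outer ->
  connect (induced e outer) y (w 0) \/ connect (induced e outer) y (w k).
Proof.
move=> yH; have w1 : w 1 \notin outer by rewrite w_outer //; lia.
have [z1 [z2 [cyz1 ez1z2 /notin_outerP[j jI z2E]]]] :=
  connect_exit yH w1 (e_conn y (w 1)).
have z1H := connect_induced_in yH cyz1.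
rewrite z2E e_sym in ez1z2; case: (inner_nbr jI ez1z2) => z1E; move: z1H cyz1.
  by rewrite z1E w_outer => [/orP[/eqP-> | /eqP jk]|]; [left | lia | lia].
by rewrite z1E w_outer => [/orP[/eqP jk | /eqP->]|]; [lia | right | lia].
Qed.

Section Disconnected.
Hypothesis H_disc : ~ connected_on e outer.

Lemma ends_disconnected : ~ connect (induced e outer) (w 0) (w k).
Proof.
move=> c0k; apply: H_disc => y z yH zH.
have RH := sym_connect_sym (induced_sym outer e_sym).
have ck0 : connect (induced e outer) (w k) (w 0) by rewrite RH.
case: (outer_connect_ends yH) (outer_connect_ends zH) => cy [] cz; rewrite RH in cz.
- exact: connect_trans cy cz.
- exact: connect_trans cy (connect_trans c0k cz).
- exact: connect_trans cy (connect_trans ck0 cz).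
- exact: connect_trans cy cz.
Qed.

Definition left_side i :=
  [set z | connect (induced e outer) (w 0) z || (z \in map w (iota 0 i.+1))].

Lemma mem_prefixP i z :
  reflect (exists2 j, j <= i & z = w j) (z \in map w (iota 0 i.+1)).
Proof.
apply: (iffP mapP) => [[j]|[j ji ->]]; first by rewrite mem_iota; exists j.
by exists j; rewrite ?mem_iota.
Qed.

Lemma w_left_side i j : j <= i -> w j \in left_side i.
Proof. by move=> ji; rewrite inE; apply/orP; right; apply/mem_prefixP; exists j. Qed.

Lemma left_side_outer_closed i z z' : i.+1 < k ->
  connect (induced e outer) (w 0) z -> e z z' -> z' != w i.+1 -> z' \in left_side i.
Proof.
move=> ik cz ezz' z'x; have zH := connect_induced_in w0_outer cz.
have [z'H|/notin_outerP[j jI z'E]] := boolP (z' \in outer).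
  rewrite inE; apply/orP; left; apply: connect_trans cz (connect1 _).
  by rewrite /induced /= zH z'H.
rewrite z'E w_eq in z'x; try lia.
rewrite z'E e_sym in ezz' *; case: (inner_nbr jI ezz') => zE.
  by move: zH; rewrite zE w_outer => [j1|]; [apply: w_left_side | ]; lia.
move: zH cz; rewrite zE w_outer => [/orP[/eqP|/eqP jk]|]; try lia.
by rewrite jk => /ends_disconnected.
Qed.

Lemma left_side_closed i : i.+1 < k ->
  forall z z', z \in left_side i -> e z z' -> z' != w i.+1 -> z' \in left_side i.
Proof.
move=> ik z z'; rewrite inE => /orP[cz|/mem_prefixP[j ji ->]] ezz' z'x.
  exact: left_side_outer_closed ik cz ezz' z'x.
have [j0|j_gt0] := posnP j.
  by apply: left_side_outer_closed ik _ ezz' z'x; rewrite j0.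
have jI : 0 < j < k by lia.
case: (inner_nbr jI ezz') => z'E; rewrite z'E; apply: w_left_side; first lia.
by rewrite z'E w_eq in z'x; lia.
Qed.

Lemma Tr_path_convex i : i.+1 < k ->
  2 * Tr e (w i.+1) <= Tr e (w i) + Tr e (w i.+2).
Proof.
move=> ik; apply: (Tr_cut_convex e_sym e_irr e_conn (left_side_closed ik)).
- by rewrite e_sym w_edge //; lia.
- exact: w_edge.
- exact: w_left_side.
rewrite inE negb_or; apply/andP; split; last first.
  by apply/mem_prefixP => -[j ji /w_inj]; lia.
have [->|ik2] := eqVneq i.+2 k; first by apply/negP; apply: ends_disconnected.
apply: contra (connect_induced_in w0_outer) _; rewrite w_outer; lia.
Qed.

End Disconnected.

End InternalPath.

Theorem theorem1 (T : finType) (e : rel T)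
  (e_sym : symmetric e) (e_irr : irreflexive e) (G_conn : connected e)
  (k : nat) (w : nat -> T) (hk : 2 <= k)
  (w_inj : forall i j, i <= k -> j <= k -> w i = w j -> i = j)
  (w_edge : forall i, i < k -> e (w i) (w i.+1))
  (w_deg : forall i, 0 < i < k -> deg e (w i) = 2) :
  let H := [set x | ~~ [exists i : 'I_k.+1, (0 < i < k) && (x == w i)]] in
  (connected_on e H -> unimodal (fun i => Tr e (w i)) k) /\
  (~ connected_on e H -> inv_unimodal (fun i => Tr e (w i)) k).
Proof.
move=> H; split=> [H_conn | H_disc].
  apply: unimodal_of_concave => i ik.
  exact: (Tr_path_concave e_sym e_irr G_conn hk w_inj w_edge w_deg).
apply: inv_unimodal_of_convex => i ik.
exact: (Tr_path_convex e_sym e_irr G_conn hk w_inj w_edge w_deg H_disc).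
Qed.
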